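(* Let $p$ be a prime and let $G$ be a $2$-tuple regular finite group of exponent $p^s$ for some $s\in\mathbb{N}$. For all $i,j\in\{1,\ldots,s\}$, the subgroup $[\Omega_i(G),\Omega_j(G)]$ is a union of order classes of $G$.
   Context: $\Omega_i(G)$ is the subgroup generated by all elements of order dividing $p^i$; $[A,B]=\langle aba^{-1}b^{-1}: a\in A,b\in B\rangle$. A subgroup $N$ of $G$ is a union of order classes if for every $n\in\mathbb{N}$ it contains either all or none of the elements of order $n$ of $G$. A finite group $G$ is $2$-tuple regular if for all pairs $(g_1,g_2),(h_1,h_2)\in G^2$ (entries may coincide) for which $g_1\mapsto h_1,g_2\mapsto h_2$ defines an isomorphism $\langle g_1,g_2\rangle\to\langle h_1,h_2\rangle$, there is a bijection $\Psi\colon G\to G$ such that for every $g\in G$ the assignment $g_1\mapsto h_1,g_2\mapsto h_2,g\mapsto\Psi(g)$ defines an isomorphism $\langle g_1,g_2,g\rangle\to\langle h_1,h_2,\Psi(g)\rangle$. *)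

From mathcomp Require Import all_boot all_fingroup all_solvable.
Set Implicit Arguments. Unset Strict Implicit. Unset Printing Implicit Defensive.
Import GroupScope.
Local Open Scope group_scope.

Section Defs.
Variable gT : finGroupType.

Definition Omega (p i : nat) (G : {set gT}) : {set gT} :=
  <<[set x in G | x ^+ (p ^ i) == 1]>>.

Definition union_of_order_classes (G N : {set gT}) : Prop :=
  forall n : nat,
    (forall x, x \in G -> #[x] = n -> x \in N) \/
    (forall x, x \in G -> #[x] = n -> x \notin N).

Definition defines_iso2 (g1 g2 h1 h2 : gT) : Prop :=
  exists f : {morphism <<[set g1; g2]>> >-> gT},
    [/\ isom <<[set g1; g2]>> <<[set h1; h2]>> f, f g1 = h1 & f g2 = h2].

Definition defines_iso3 (g1 g2 g3 h1 h2 h3 : gT) : Prop :=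
  exists f : {morphism <<[set g1; g2; g3]>> >-> gT},
    [/\ isom <<[set g1; g2; g3]>> <<[set h1; h2; h3]>> f,
        f g1 = h1, f g2 = h2 & f g3 = h3].

Definition tuple2_regular (G : {set gT}) : Prop :=
  forall g1 g2 h1 h2 : gT,
    g1 \in G -> g2 \in G -> h1 \in G -> h2 \in G ->
    defines_iso2 g1 g2 h1 h2 ->
    exists Psi : gT -> gT,
      [/\ {in G &, injective Psi}, Psi @: G = G &
          forall g, g \in G -> defines_iso3 g1 g2 g h1 h2 (Psi g)].

End Defs.

From mathcomp Require Import all_boot all_fingroup all_solvable.
Import GroupScope.
Local Open Scope group_scope.
Set Implicit Arguments. Unset Strict Implicit.

(* In a 2-tuple regular group G an isomorphism x |-> y between cyclic subgroups
   (that is, #[x] = #[y]) extends to any further element, and then once more.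
   Hence the subsets of G closed under replacing an element by another one of
   the same order are stable under generation and under taking commutator sets.
   The generating set of Omega_i(G) is such a subset, so [Omega_i, Omega_j] is
   too. *)

Section Iso.
Variable gT : finGroupType.
Implicit Types x y a b : gT.

Lemma defines_iso2_eq_order x y : #[x] = #[y] -> defines_iso2 x x y y.
Proof.
move=> oxy; have dyx : #[y] %| #[x] by rewrite oxy.
rewrite /defines_iso2 !setUid; exists (eltm_morphism dyx).
by split; [apply/isomP; rewrite injm_eltm oxy im_eltm | exact: eltm_id..].
Qed.

Lemma defines_iso3_iso2 x a y b : defines_iso3 x x a y y b -> defines_iso2 x a y b.
Proof. by rewrite /defines_iso3 !setUid => -[f [If fx _ fa]]; exists f. Qed.

Lemma defines_iso3_injm (g1 g2 g3 h1 h2 h3 : gT) :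
  defines_iso3 g1 g2 g3 h1 h2 h3 ->
  exists2 f : {morphism <<[set g1; g2; g3]>> >-> gT},
    'injm f & [/\ f g1 = h1, f g2 = h2 & f g3 = h3].
Proof. by case=> f [/isomP[injf _] f1 f2 f3]; exists f. Qed.

Lemma mem_gen3 (g1 g2 g3 : gT) :
  [/\ g1 \in <<[set g1; g2; g3]>>, g2 \in <<[set g1; g2; g3]>>
    & g3 \in <<[set g1; g2; g3]>>].
Proof. by split; apply: mem_gen; rewrite !inE eqxx ?orbT. Qed.

Lemma defines_iso3_order (g1 g2 g3 h1 h2 h3 : gT) :
  defines_iso3 g1 g2 g3 h1 h2 h3 -> #[g3] = #[h3].
Proof.
case/defines_iso3_injm=> f injf [_ _ <-]; have [_ _ g3D] := mem_gen3 g1 g2 g3.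
by rewrite (order_injm injf).
Qed.

End Iso.

Section OrderClosed.
Variables (gT : finGroupType) (G : {group gT}).
Implicit Types (x y a b : gT) (A B C N : {set gT}).

Definition order_closed N :=
  forall x y, x \in G -> y \in G -> #[x] = #[y] -> x \in N -> y \in N.

Lemma order_closed_union_of_order_classes N :
  order_closed N -> union_of_order_classes G N.
Proof.
move=> closedN n.
have [/exists_inP[x xG /andP[/eqP ox xN]] | noN] :=
  boolP [exists x in G, (#[x] == n) && (x \in N)].
  by left=> y yG oy; apply: (closedN x); rewrite ?ox ?oy.
right=> y yG oy; apply: contra noN => yN.
by apply/exists_inP; exists y; rewrite ?oy ?eqxx.
Qed.

Lemma Omega_sub p i : Omega p i G \subset G.
Proof. by rewrite gen_subG; apply/subsetP => z; rewrite inE => /andP[]. Qed.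

Lemma commg_set_sub A B : A \subset G -> B \subset G -> commg_set A B \subset G.
Proof.
move=> sAG sBG; apply/subsetP => _ /imset2P[a b aA bB ->].
by rewrite groupR ?(subsetP sAG _ aA) ?(subsetP sBG _ bB).
Qed.

Hypothesis regG : tuple2_regular G.

Lemma regular_extend x a y b g : [/\ x \in G, a \in G, y \in G & b \in G] ->
  defines_iso2 x a y b -> g \in G ->
  exists2 g', g' \in G & defines_iso3 x a g y b g'.
Proof.
case=> xG aG yG bG iso_xy gG.
have [Psi [_ imPsi isoPsi]] := regG xG aG yG bG iso_xy.
by exists (Psi g); [rewrite -imPsi imset_f | exact: isoPsi].
Qed.

Lemma regular_extend_eq_order x y g : x \in G -> y \in G -> #[x] = #[y] ->
  g \in G -> exists2 g', g' \in G & defines_iso3 x x g y y g'.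
Proof. by move=> xG yG oxy; apply: regular_extend => //; exact: defines_iso2_eq_order. Qed.

(* Write x = c * z with c in C and extend x |-> y to c |-> c'. Then c' lies in C,
   and c'^-1 * y has the order of the shorter product z, so induction applies. *)
Lemma order_closed_gen C : C \subset G -> order_closed C -> order_closed <<C>>.
Proof.
move=> sCG closedC x y xG yG oxy /gen_prodgP[n [c Cc defx]].
elim: n c Cc x y xG yG oxy defx => [|n IHn] c Cc x y xG yG oxy.
  rewrite big_ord0 => x1; rewrite x1 order1 in oxy.
  by rewrite (eqP (_ : y == 1)) ?group1 // -order_eq1 -oxy.
rewrite big_ord_recl; set z := \prod_(i < n) _ => defx.
have cG : c ord0 \in G := subsetP sCG _ (Cc ord0).
have [c' c'G /defines_iso3_injm[f injf [fx _ fc]]] :=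
  regular_extend_eq_order xG yG oxy cG.
have [xD _ cD] := mem_gen3 x x (c ord0).
have defz : z = (c ord0)^-1 * x by rewrite defx mulKg.
have zD : z \in <<[set x; x; c ord0]>> by rewrite defz groupM ?groupV.
have fz : f z = c'^-1 * y by rewrite defz morphM ?groupV // morphV // fc fx.
have c'C : c' \in C.
  by apply: (closedC (c ord0)); rewrite // -fc (order_injm injf).
have : c'^-1 * y \in <<C>>.
  apply: (IHn (fun i => c (lift ord0 i))) (erefl z) => //.
  - by rewrite defz groupM ?groupV.
  - by rewrite groupM ?groupV.
  - by rewrite -fz (order_injm injf).
by rewrite -{2}(mulKVg c' y); apply: groupM; rewrite mem_gen.
Qed.

Lemma order_closed_commg_set A B : A \subset G -> B \subset G ->
  order_closed A -> order_closed B -> order_closed (commg_set A B).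
Proof.
move=> sAG sBG closedA closedB x y xG yG oxy /imset2P[a b aA bB defx].
have aG := subsetP sAG _ aA; have bG := subsetP sBG _ bB.
have [a' a'G iso_a] := regular_extend_eq_order xG yG oxy aG.
have [b' b'G /defines_iso3_injm[f injf [fx fa fb]]] :=
  regular_extend (And4 xG aG yG a'G) (defines_iso3_iso2 iso_a) bG.
have [_ aD bD] := mem_gen3 x a b.
have a'A : a' \in A by apply: (closedA a); rewrite // (defines_iso3_order iso_a).
have b'B : b' \in B by apply: (closedB b); rewrite // -fb (order_injm injf).
by rewrite -fx (congr1 f defx) morphR // fa fb imset2_f.
Qed.

Lemma order_closed_Omega p i : order_closed (Omega p i G).
Proof.
apply: order_closed_gen; first by apply/subsetP => z; rewrite inE => /andP[].
by move=> x y xG yG oxy; rewrite !inE xG yG -!order_dvdn oxy.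
Qed.

End OrderClosed.

Theorem lemma4p6 (gT : finGroupType) (G : {group gT}) (p s : nat) :
  prime p -> tuple2_regular G -> exponent G = (p ^ s)%N ->
  forall i j : nat, (0 < i <= s)%N -> (0 < j <= s)%N ->
    union_of_order_classes G [~: Omega p i G, Omega p j G].
Proof.
move=> _ regG _ i j _ _.
have sOG := Omega_sub G p.
apply/order_closed_union_of_order_classes/order_closed_gen => //.
  exact: commg_set_sub.
by apply: order_closed_commg_set => //; apply: order_closed_Omega.
Qed.
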